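(* Let $\sigma\in(0,0.25]$, $\pi_0\in(0,1)$, $w>0$, and let $\psi(\pi)=w$ if $\pi\ge\pi_0$ and $\psi(\pi)=0$ otherwise (i.e. the threshold equals the prior). Define $\pi_1(1)=\frac{(1+4\sigma)\pi_0}{1+4\sigma\pi_0}$, $\pi_1(0)=\frac{(1-4\sigma)\pi_0}{1-4\sigma\pi_0}$, $\Phi(C,\sigma,\pi_0)=0.5+2\sigma\pi_0+(0.5+2\sigma\pi_0)\psi(\pi_1(1))+(0.5-2\sigma\pi_0)\psi(\pi_1(0))$ and $\Phi(S,\sigma,\pi_0)=0.5+\psi(\pi_0)$; the expert chooses the complex rule iff $\Phi(C,\sigma,\pi_0)\ge\Phi(S,\sigma,\pi_0)$. Then the expert chooses the complex rule if and only if $$w\le\frac{4\sigma\pi_0}{1-4\sigma\pi_0}.$$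
   Context: Interpretation: the expert earns wage $w$ iff the posterior belief that he is competent is at least the prior $\pi_0$; the complex rule yields the correct action with probability $0.5+2\sigma$ if he is competent and $0.5$ otherwise, and the simple rule yields it with probability $0.5$ and reveals nothing. *)

From Stdlib Require Import Reals.
Open Scope R_scope.

Definition psi (pi0 w p : R) : R := if Rle_dec pi0 p then w else 0.

(* Posterior after a correct (1) / incorrect (0) outcome under the complex rule. *)
Definition pi1_1 (sigma pi0 : R) : R := ((1 + 4 * sigma) * pi0) / (1 + 4 * sigma * pi0).
Definition pi1_0 (sigma pi0 : R) : R := ((1 - 4 * sigma) * pi0) / (1 - 4 * sigma * pi0).

Definition PhiC (sigma pi0 w : R) : R :=
  1/2 + 2 * sigma * pi0
  + (1/2 + 2 * sigma * pi0) * psi pi0 w (pi1_1 sigma pi0)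
  + (1/2 - 2 * sigma * pi0) * psi pi0 w (pi1_0 sigma pi0).

Definition PhiS (pi0 w : R) : R := 1/2 + psi pi0 w pi0.

Definition chooses_complex (sigma pi0 w : R) : Prop := PhiC sigma pi0 w >= PhiS pi0 w.

(** With the wage threshold equal to the prior, a success under the complex rule
    strictly raises the posterior above the prior and a failure strictly lowers it,
    so the complex rule pays [w] exactly after a success, i.e. with probability
    [1/2 + 2 sigma pi0], while the simple rule leaves the prior unchanged and always
    pays [w].  Choosing the complex rule thus amounts to
    [2 sigma pi0 >= (1/2 - 2 sigma pi0) w], which is the bound on [w]. *)

From Stdlib Require Import Reals Lra.
Open Scope R_scope.

Lemma Rdiv_mult_r_cancel (b c : R) : c <> 0 -> b / c * c = b.
Proof. intros Hc; field; exact Hc. Qed.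

Lemma Rle_div_r_iff (a b c : R) : 0 < c -> (a <= b / c <-> a * c <= b).
Proof.
  intros Hc; rewrite <- (Rdiv_mult_r_cancel b c) at 2 by lra; split; intros H.
  - now apply Rmult_le_compat_r; [lra|].
  - now apply Rmult_le_reg_r with c.
Qed.

Lemma Rlt_div_r_iff (a b c : R) : 0 < c -> (a < b / c <-> a * c < b).
Proof.
  intros Hc; rewrite <- (Rdiv_mult_r_cancel b c) at 2 by lra; split; intros H.
  - now apply Rmult_lt_compat_r.
  - now apply Rmult_lt_reg_r with c.
Qed.

Lemma Rdiv_lt_l_iff (a b c : R) : 0 < c -> (b / c < a <-> b < a * c).
Proof.
  intros Hc; rewrite <- (Rdiv_mult_r_cancel b c) at 2 by lra; split; intros H.
  - now apply Rmult_lt_compat_r.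
  - now apply Rmult_lt_reg_r with c.
Qed.

Lemma psi_ge (pi0 w p : R) : pi0 <= p -> psi pi0 w p = w.
Proof. intros H; unfold psi; destruct (Rle_dec pi0 p); [reflexivity | contradiction]. Qed.

Lemma psi_lt (pi0 w p : R) : p < pi0 -> psi pi0 w p = 0.
Proof. intros H; unfold psi; destruct (Rle_dec pi0 p); [lra | reflexivity]. Qed.

Lemma prior_lt_pi1_1 (sigma pi0 : R) :
  0 < sigma -> 0 < pi0 < 1 -> pi0 < pi1_1 sigma pi0.
Proof.
  intros Hs Hp; unfold pi1_1.
  assert (Hsp : 0 < sigma * pi0) by nra.
  apply Rlt_div_r_iff; nra.
Qed.

Lemma pi1_0_lt_prior (sigma pi0 : R) :
  0 < sigma -> 0 < pi0 < 1 -> 4 * sigma * pi0 < 1 -> pi1_0 sigma pi0 < pi0.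
Proof.
  intros Hs Hp Hd; unfold pi1_0.
  assert (Hsp : 0 < sigma * pi0) by nra.
  apply Rdiv_lt_l_iff; nra.
Qed.

Lemma PhiC_threshold_prior (sigma pi0 w : R) :
  0 < sigma -> 0 < pi0 < 1 -> 4 * sigma * pi0 < 1 ->
  PhiC sigma pi0 w = 1/2 + 2 * sigma * pi0 + (1/2 + 2 * sigma * pi0) * w.
Proof.
  intros Hs Hp Hd; unfold PhiC.
  rewrite psi_ge by (apply Rlt_le, prior_lt_pi1_1; assumption).
  rewrite psi_lt by (apply pi1_0_lt_prior; assumption).
  ring.
Qed.

Lemma PhiS_threshold_prior (pi0 w : R) : PhiS pi0 w = 1/2 + w.
Proof. unfold PhiS; rewrite psi_ge by apply Rle_refl; reflexivity. Qed.

Theorem corollary3 (sigma pi0 w : R) :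
  0 < sigma <= 1/4 -> 0 < pi0 < 1 -> 0 < w ->
  (chooses_complex sigma pi0 w <-> w <= (4 * sigma * pi0) / (1 - 4 * sigma * pi0)).
Proof.
  intros Hs Hp _.
  assert (Hd : 4 * sigma * pi0 < 1) by nra.
  unfold chooses_complex.
  rewrite PhiC_threshold_prior, PhiS_threshold_prior, Rle_div_r_iff by lra.
  lra.
Qed.
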